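(* Every irrevocable (non-wasteful) distribution policy is individually rational with respect to greedy players.
   Context: Players: a finite set $N=\{a_1,\dots,a_n\}$. A characteristic function is $v:2^N\to\mathbb{R}_{\ge 0}$ with $v(\emptyset)=0$, monotone and bounded: $\mathsf{min}\le v(S)\le v(T)\le\mathsf{max}$ for all nonempty $S\subseteq T\subseteq N$, for fixed constants $0<\mathsf{min}\le\mathsf{max}$. Online process: an arrival order is a permutation $\pi=(\pi_1,\dots,\pi_n)$ of $N$; player $\pi_t$ arrives at time $t$. For $S\subseteq N$, $\pi_{|S}$ denotes the players of $S$ in the relative order of $\pi$; $\pi_{|S}$ is a prefix of $\pi_{|T}$ if $S\subseteq T$ and the players of $S$ are the first $|S|$ players of $\pi_{|T}$. Let $C^{t-1}$ be the coalition structure of players arrived before time $t$ ($C^0=\emptyset$). At time $t$, player $\pi_t$ either joins an existing coalition $S\in C^{t-1}$ or forms $\{\pi_t\}$ (choice $S=\emptyset$); decisions are never revised. A distribution policy $\varphi$ assigns to every coalition $S$ with order $\pi_{|S}$ a vector $(\varphi_i(S,\pi_{|S}))_{i\in S}$ with $\sum_{i\in S}\varphi_i=v(S)$. It is irrevocable if for every $\pi$, every $S\subseteq T\subseteq N$ with $\pi_{|S}$ a prefix of $\pi_{|T}$ and every $i\in S$, $\varphi_i(S,\pi_{|S})\le\varphi_i(T,\pi_{|T})$. Greedy players: $\pi_t$ chooses $S\in C^{t-1}\cup\{\emptyset\}$ maximizing $\varphi_{\pi_t}(S\cup\{\pi_t\},\pi_{|S\cup\{\pi_t\}})$ (predetermined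 tie-breaking); $C_g^t$ is the structure after time $t$. Individual rationality: for every $v$ and $\pi$, every $t\le n$, every $S\in C_g^t$ and every $i\in S$, $\varphi_i(S,\pi_{|S})\ge v(\{i\})$. *)

From HB Require Import structures.
From mathcomp Require Import all_boot all_order all_algebra.
Set Implicit Arguments. Unset Strict Implicit. Unset Printing Implicit Defensive.
Import Order.TTheory GRing.Theory Num.Theory.
Local Open Scope ring_scope.

Section Defs.
Variables (T : finType) (R : realFieldType).

Definition arrival_order (pi : seq T) : Prop := perm_eq pi (enum T).

Definition restr (pi : seq T) (S : {set T}) : seq T := [seq x <- pi | x \in S].

Definition char_fun (mn mx : R) (v : {set T} -> R) : Prop :=
  [/\ v set0 = 0, forall S, 0 <= v S, 0 < mn, mn <= mx &
      forall S U : {set T}, S != set0 -> S \subset U ->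
        [/\ mn <= v S, v S <= v U & v U <= mx]].

(* A distribution policy phi (phi s i = share of i in the coalition whose
   players, in arrival order, are s) distributing exactly v(S). *)
Definition distribution_policy (v : {set T} -> R) (phi : seq T -> T -> R) : Prop :=
  forall pi, arrival_order pi -> forall S : {set T},
    \sum_(i in S) phi (restr pi S) i = v S.

Definition irrevocable (phi : seq T -> T -> R) : Prop :=
  forall pi, arrival_order pi -> forall S U : {set T}, S \subset U ->
    prefix (restr pi S) (restr pi U) ->
    forall i, i \in S -> phi (restr pi S) i <= phi (restr pi U) i.

(* Payoff of player p when joining S (S = set0 means forming {p}). *)
Definition join_value (phi : seq T -> T -> R) (pi : seq T) (S : {set T}) (p : T) : R :=
  phi (restr pi (S :|: [set p])) p.

Definition update (C : seq {set T}) (S : {set T}) (p : T) : seq {set T} :=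
  if S == set0 then [set p] :: C else (S :|: [set p]) :: rem S C.

Inductive greedy_run (phi : seq T -> T -> R) (pi : seq T) : nat -> seq {set T} -> Prop :=
| greedy0 : greedy_run phi pi 0 [::]
| greedyS t C S p : greedy_run phi pi t C -> (t < size pi)%N -> p = nth p pi t ->
    S \in set0 :: C ->
    (forall S', S' \in set0 :: C -> join_value phi pi S' p <= join_value phi pi S p) ->
    greedy_run phi pi t.+1 (update C S p).

End Defs.

From HB Require Import structures.
From mathcomp Require Import all_boot all_order all_algebra.
Import Order.TTheory GRing.Theory Num.Theory.
Set Implicit Arguments.
Unset Strict Implicit.
Local Open Scope ring_scope.

(* Every coalition formed by greedy players after time t consists of players
   among the first t arrivals, so when the next player p joins a coalition S,
   the order restricted to S is a prefix of the order restricted to S + p.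
   Irrevocability therefore never lowers the share of an old member, and by
   induction each old member keeps at least v({i}).  The newcomer p could have
   formed {p} alone and received exactly v({p}); greedy choice gives at least
   that much. *)

Lemma prefix_filter_cat (T : eqType) (a b : pred T) (s1 s2 : seq T) :
  {in s1, a =1 b} -> ~~ has a s2 ->
  prefix [seq x <- s1 ++ s2 | a x] [seq x <- s1 ++ s2 | b x].
Proof.
move=> eq_ab /negbTE no_a.
rewrite !filter_cat (eq_in_filter eq_ab).
have /eqP -> : [seq x <- s2 | a x] == [::] by rewrite -[_ == _]negbK -has_filter no_a.
by rewrite cats0 prefix_prefix.
Qed.

Section Arrivals.
Variable T : finType.

Lemma prefix_restr_arrival (pi : seq T) (S : {set T}) t x0 :
  uniq pi -> (t < size pi)%N -> {subset S <= take t pi} ->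
  prefix (restr pi S) (restr pi (S :|: [set nth x0 pi t])).
Proof.
move=> uniq_pi t_lt sub_S; set p := nth x0 pi t.
have := uniq_pi; rewrite -(cat_take_drop t pi) cat_uniq => /and3P[_ /hasPn disj _].
have p_late : p \notin take t pi by apply: disj; rewrite (drop_nth x0 t_lt) mem_head.
have := @prefix_filter_cat _ (fun x => x \in S) (fun x => x \in S :|: [set p]) (take t pi) (drop t pi).
rewrite cat_take_drop; apply.
- move=> x x_early; have x_ne_p : x != p by apply: contraNneq p_late => <-.
  by rewrite !inE (negbTE x_ne_p) orbF.
- by apply/hasPn => x /disj; apply/contra/sub_S.
Qed.

Lemma mem_update (C : seq {set T}) (S0 : {set T}) p S :
  S \in update C S0 p -> S = S0 :|: [set p] \/ S \in C.
Proof.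
rewrite /update; case: eqVneq => [->|_]; rewrite inE => /orP[/eqP->|S_C].
- by left; rewrite set0U.
- by right.
- by left.
- by right; apply: mem_rem S_C.
Qed.

Lemma mem_cons_set0 (C : seq {set T}) S x : S \in set0 :: C -> x \in S -> S \in C.
Proof. by rewrite inE => /orP[/eqP->|//]; rewrite inE. Qed.

Lemma greedy_run_arrived (R : realFieldType) (phi : seq T -> T -> R) pi t C :
  greedy_run phi pi t C -> forall S, S \in C -> {subset S <= take t pi}.
Proof.
elim=> [//|t0 C0 S0 p _ IH t_lt p_def S0_in _] S /mem_update[->|/IH sub_S] x;
  rewrite (take_nth p t_lt) -p_def mem_rcons inE; last by move/sub_S ->; rewrite orbT.
rewrite !inE => /orP[x_S0|->//].
by rewrite (IH S0 (mem_cons_set0 S0_in x_S0)) ?orbT.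
Qed.

End Arrivals.

Lemma policy_singleton (T : finType) (R : realFieldType) (v : {set T} -> R)
    (phi : seq T -> T -> R) pi i :
  distribution_policy v phi -> arrival_order pi ->
  phi (restr pi [set i]) i = v [set i].
Proof. by move=> dist_phi pi_ord; rewrite -(dist_phi pi pi_ord) big_set1. Qed.

Theorem proposition2 (T : finType) (R : realFieldType) (mn mx : R)
  (v : {set T} -> R) (phi : seq T -> T -> R) :
  char_fun mn mx v -> distribution_policy v phi -> irrevocable phi ->
  forall pi : seq T, arrival_order pi ->
  forall (t : nat) (C : seq {set T}), greedy_run phi pi t C ->
  forall S : {set T}, S \in C -> forall i, i \in S -> v [set i] <= phi (restr pi S) i.
Proof.
move=> _ dist_phi irr_phi pi pi_ord t C run.
have uniq_pi : uniq pi by rewrite (perm_uniq pi_ord) enum_uniq.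
elim: run => [//|t0 C0 S0 p run IH t_lt p_def S0_in greedy_p] S /mem_update[->|/IH//].
move=> i; rewrite !inE => /orP[i_S0|/eqP->].
- have S0_C0 := mem_cons_set0 S0_in i_S0.
  apply: le_trans (IH S0 S0_C0 i i_S0) _.
  apply: irr_phi => //; first exact: subsetUl.
  rewrite p_def; apply: prefix_restr_arrival => //.
  exact: greedy_run_arrived run S0 S0_C0.
- have := greedy_p set0; rewrite mem_head /join_value set0U => /(_ isT).
  by rewrite (policy_singleton p dist_phi pi_ord).
Qed.
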